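(* Fix $\beta>0$ and a transient MDP with a sink state as in the context. For each stationary policy $\pi=(\bm d)_\infty\in\Pi_{\mathrm{SR}}$ and each $\bm z\in\mathbb R^S$ with $\bm z\ge\bm 0$: \[ \bm w^\infty(\pi,\bm z)>-\bm\infty\quad\Longrightarrow\quad\rho(\bm B^{\bm d})<1, \] where $\rho$ denotes the spectral radius.
   Context: MDP: states $\bar{\mathcal S}=\{1,\dots,S,S+1\}$, $e:=S+1$ a sink state, $\mathcal S=\{1,\dots,S\}$; finite actions $\mathcal A$; transitions $p(s,a,s')$, real rewards $r(s,a,s')$ of arbitrary sign; $p(e,a,e)=1$, $r(e,a,e)=0$. Transience (standing assumption): for every stationary deterministic policy $\pi$, $\sum_{t\ge0}\mathbb P^{\pi,s}[\tilde s_t=s']<\infty$ for all $s,s'\in\mathcal S$. A decision rule $\bm d$ assigns to each $s\in\mathcal S$ a distribution $(d_a(s))_a$ over actions; $\Pi_{\mathrm{SR}}$ is the set of stationary randomized policies $(\bm d)_\infty$. Define $B^{\bm d}_{s,s'}=\sum_a p(s,a,s')d_a(s)e^{-\beta r(s,a,s')}$ and $b^{\bm d}_s=\sum_a p(s,a,e)d_a(s)e^{-\beta r(s,a,e)}$ for $s,s'\in\mathcal S$. For $t\in\mathbb N$ and $\bm z\in\mathbb R^S$: $\bm w^t(\pi,\bm z)=-(\bm B^{\bm d})^t\bm z-\sum_{k=0}^{t-1}(\bm B^{\bm d})^k\bm b^{\bm d}$, and $\bm w^\infty(\pi,\bm z)=\liminf_{t\to\infty}\bm w^t(\pi,\bm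 z)$ componentwise; $>-\bm\infty$ means every component is finite. *)

From HB Require Import structures.
From mathcomp Require Import all_boot all_order all_algebra.
From mathcomp Require Import all_classical all_reals all_analysis.
From mathcomp Require Import complex.

Set Implicit Arguments.
Unset Strict Implicit.
Unset Printing Implicit Defensive.

Import Order.TTheory GRing.Theory Num.Theory.
Local Open Scope ring_scope.
Local Open Scope classical_set_scope.

(* t-th power of a square matrix (works also for n = 0). *)
Definition mxpow (R : comRingType) (n : nat) (M : 'M[R]_n) (t : nat) : 'M[R]_n :=
  iter t (mulmx M) 1%:M.

(* Spectral radius of a real square matrix: the largest modulus of its
   complex eigenvalues (0 for the empty matrix, by the convention sup set0 = 0). *)
Definition spectral_radius (R : realType) (n : nat) (M : 'M[R]_n) : R :=
  sup [set Normc.normc l | l in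
        [set l : R[i] | eigenvalue (map_mx (fun x : R => x%:C%C) M) l]].

(* MDP with states {0,...,S}; the last state ord_max (= S+1 in the      *)
(* paper's 1-based numbering) is the sink e; the non-sink states are   *)
(* 'I_S, embedded by widen_ord.                                         *)

Definition sink (S : nat) : 'I_S.+1 := ord_max.
Definition inS (S : nat) (s : 'I_S) : 'I_S.+1 := widen_ord (leqnSn S) s.

Section MDP.
Variables (R : realType) (S : nat) (A : finType).
Variable p : 'I_S.+1 -> A -> 'I_S.+1 -> R.
Variable r : 'I_S.+1 -> A -> 'I_S.+1 -> R.

Definition is_transition_kernel : Prop :=
  (forall s a s', 0 <= p s a s') /\ (forall s a, \sum_(s' < S.+1) p s a s' = 1).

Definition sink_absorbing : Prop :=
  forall a, p (sink S) a (sink S) = 1 /\ r (sink S) a (sink S) = 0.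

Definition Pmat (pi : 'I_S.+1 -> A) : 'M[R]_S.+1 :=
  \matrix_(s, s') p s (pi s) s'.

Definition state_prob (pi : 'I_S.+1 -> A) (s s' : 'I_S.+1) (t : nat) : R :=
  (Pmat pi ^+ t) s s'.

(* Transience: for every stationary deterministic policy, the expected
   number of visits sum_t P^{pi,s}[s_t = s'] is finite (nonnegative terms,
   i.e. bounded partial sums) for all non-sink s, s'. *)
Definition transient : Prop :=
  forall (pi : 'I_S.+1 -> A) (s s' : 'I_S),
    exists M : R, forall n : nat,
      \sum_(t < n) state_prob pi (inS s) (inS s') t <= M.

Definition decision_rule (d : 'I_S -> A -> R) : Prop :=
  (forall s a, 0 <= d s a) /\ (forall s, \sum_a d s a = 1).

Variable beta : R.

Definition Bmat (d : 'I_S -> A -> R) : 'M[R]_S :=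
  \matrix_(s, s') \sum_a
     p (inS s) a (inS s') * d s a * expR (- beta * r (inS s) a (inS s')).

Definition bvec (d : 'I_S -> A -> R) : 'cV[R]_S :=
  \col_s \sum_a
     p (inS s) a (sink S) * d s a * expR (- beta * r (inS s) a (sink S)).

Definition w_t (d : 'I_S -> A -> R) (z : 'cV[R]_S) (t : nat) : 'cV[R]_S :=
  - (mxpow (Bmat d) t *m z) - \sum_(k < t) (mxpow (Bmat d) k *m bvec d).

Definition w_inf (d : 'I_S -> A -> R) (z : 'cV[R]_S) (s : 'I_S) : \bar R :=
  limn_einf (fun t => ((w_t d z t) s ord0)%:E).

End MDP.

From HB Require Import structures.
From mathcomp Require Import all_boot all_order all_algebra.
From mathcomp Require Import all_classical all_reals all_analysis.
From mathcomp Require Import complex.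
Import Order.TTheory GRing.Theory Num.Theory.
Local Open Scope ring_scope.

(* B and b are entrywise nonnegative.  As z >= 0, w^t <= - \sum_(k < t) B^k b, so a finite
   w^oo bounds the partial sums of \sum_k B^k b.  Transience forces (B^m b)_j > 0 for
   some m, for every state j: otherwise the states where this fails could never be left
   by a deterministic policy choosing actions in the support of d, and the expected
   number of visits to them would be infinite.  Hence the partial sums of \sum_k B^k are
   bounded entrywise, some power B^N has entry sum c < 1, and since |l|^N <= c for every
   eigenvalue l, the spectral radius is at most c^(1/N) < 1. *)

Lemma mxpowE (R : comNzRingType) (n : nat) (M : 'M[R]_n) (t : nat) :
  mxpow M t = M ^+ t.
Proof. by elim: t => [|t IH]; rewrite ?expr0 // exprS -IH. Qed.

Lemma map_mxX (aR rR : comNzRingType) (f : {rmorphism aR -> rR}) (n : nat)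
    (M : 'M[aR]_n) (t : nat) :
  map_mx f (M ^+ t) = map_mx f M ^+ t.
Proof.
by elim: t => [|t IH]; rewrite ?expr0 ?map_mx1 // !exprS -!mulmxE map_mxM IH.
Qed.

Lemma ler_sum_term {R : numDomainType} {I : finType} {F : I -> R} (i : I) :
  (forall j, 0 <= F j) -> F i <= \sum_j F j.
Proof. by move=> F_ge0; rewrite (bigD1 i) //= lerDl sumr_ge0. Qed.

Definition psum_bounded {R : numDomainType} (u : nat -> R) : Prop :=
  exists K, forall m, \sum_(k < m) u k <= K.

Lemma psum_bounded_exists_lt {R : archiRealFieldType} {u : nat -> R} {e : R} :
  psum_bounded u -> 0 < e -> exists N, u N < e.
Proof.
move=> [K hK] e0; apply: contrapT => /forallNP hu.
pose m := Num.bound `|K / e|.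
have : m%:R * e <= K.
  apply: le_trans (hK m); rewrite mulr_natl -[in e *+ m](card_ord m) -sumr_const.
  by apply: ler_sum => k _; rewrite leNgt; apply/negP/hu.
rewrite -ler_pdivlMr // leNgt => /negP; apply.
exact: le_lt_trans (ler_norm _) (archi_boundP (normr_ge0 _)).
Qed.

Lemma psum_bounded_sum {R : realDomainType} {I : finType} (P : pred I)
    {u : I -> nat -> R} :
  (forall i, psum_bounded (u i)) -> psum_bounded (fun k => \sum_(i | P i) u i k).
Proof.
move=> /choice [K hK]; exists (\sum_(i | P i) K i) => m.
by rewrite exchange_big /=; apply: ler_sum => i _; exact: hK.
Qed.

Lemma psum_bounded_of_limn_einf (R : realType) (x f : nat -> R) :
  (forall k, 0 <= f k) -> (forall t, x t <= - \sum_(k < t) f k) ->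
  limn_einf (fun t => (x t)%:E) \is a fin_num -> psum_bounded f.
Proof.
move=> f_ge0 hx; apply: contraPP => hf.
suff -> : limn_einf (fun t => (x t)%:E) = -oo%E by [].
apply: (cvgNy_limn_einf_sup _).1; apply/cvgeNyPle => M.
have [t0 ht0] : exists t0, - M < \sum_(k < t0) f k.
  apply: contrapT => /forallNP ht0; apply: hf; exists (- M) => t.
  by rewrite leNgt; apply/negP/ht0.
exists t0 => // t /= t0t; rewrite lee_fin (le_trans (hx t)) // lerNl.
have := @nondecreasing_series _ f xpredT 0 (fun k _ _ => f_ge0 k) _ _ t0t.
by rewrite !big_mkord; exact/le_trans/ltW.
Qed.

Lemma ler_powR_invn (R : realType) (x c : R) (N : nat) :
  0 <= x -> x ^+ N.+1 <= c -> x <= c `^ N.+1%:R^-1.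
Proof.
move=> x0 hxc; have c0 : 0 <= c := le_trans (exprn_ge0 _ x0) hxc.
have {1}-> : x = (x ^+ N.+1) `^ N.+1%:R^-1.
  by rewrite -powR_mulrn // -powRrM mulfV ?pnatr_eq0 // powRr1.
by apply: ge0_ler_powR; rewrite ?invr_ge0 ?nnegrE ?exprn_ge0.
Qed.

Lemma powR_lt1 (R : realType) (x r : R) : 0 <= x < 1 -> 0 < r -> x `^ r < 1.
Proof.
move=> /andP[x0 x1] r0; have <- : 1 `^ r = 1 :> R by rewrite powR1.
by apply: gt0_ltr_powR; rewrite ?nnegrE.
Qed.

Lemma spectral_radius_le {R : realType} {n : nat} (B : 'M[R]_n) (u : R) :
  0 <= u ->
  (forall l, eigenvalue (map_mx (fun x : R => x%:C%C) B) l -> Normc.normc l <= u) ->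
  spectral_radius B <= u.
Proof.
rewrite /spectral_radius; set E := image _ _ => u0 hu.
have [[x Ex]|/nonemptyPn ->] := pselect (E !=set0)%classic; last by rewrite sup0.
by apply: ge_sup; [exists x | move=> _ [l hl <-]; exact: hu].
Qed.

Section NonnegativeMatrix.
Context {R : realType} {n : nat} {B : 'M[R]_n}.
Hypothesis B_ge0 : forall i j, 0 <= B i j.

Lemma exprmx_ge0 k i j : 0 <= (B ^+ k) i j.
Proof.
elim: k i j => [|k IH] i j; first by rewrite expr0 mxE ler0n.
by rewrite exprS -mulmxE mxE; apply: sumr_ge0 => l _; apply: mulr_ge0.
Qed.

Lemma exprmx_mul_ge0 {v : 'cV[R]_n} :
  (forall i, 0 <= v i ord0) -> forall k i, 0 <= (B ^+ k *m v) i ord0.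
Proof.
by move=> v_ge0 k i; rewrite mxE; apply: sumr_ge0 => l _; rewrite mulr_ge0 ?exprmx_ge0.
Qed.

Lemma eigenvalue_exprn_le N (l : R[i]) :
  eigenvalue (map_mx (fun x : R => x%:C%C) B) l ->
  `|l| ^+ N <= (\sum_i \sum_j (B ^+ N) i j)%:C%C.
Proof.
move=> /eigenvalueP [v hv vn0].
set T := \sum_i \sum_j (B ^+ N) i j.
have hvN : v *m map_mx (real_complex R) (B ^+ N) = l ^+ N *: v.
  rewrite map_mxX; elim: N {T} => [|N IH]; first by rewrite !expr0 mulmx1 scale1r.
  by rewrite exprS -mulmxE mulmxA hv -scalemxAl IH scalerA exprS.
have BN_ge0 i j : 0 <= (B ^+ N) i j := exprmx_ge0 N i j.
have hcol j : `|l| ^+ N * `|v 0 j| <= \sum_i `|v 0 i| * ((B ^+ N) i j)%:C%C.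
  move/matrixP/(_ 0 j): hvN; rewrite !mxE => hvj.
  rewrite -normrX -normrM -hvj; apply: le_trans (ler_norm_sum _ _ _) _.
  by apply: ler_sum => i _; rewrite mxE normrM [`|_%:C%C|]ger0_norm ?ler0c.
have hrow k : (\sum_j (B ^+ N) k j)%:C%C <= T%:C%C.
  by rewrite lecR (ler_sum_term k) // => i; exact: sumr_ge0.
have [j vj0] : exists j, v 0 j != 0.
  apply: contrapT => /forallNP vj0; apply/negP: vn0; rewrite negbK.
  by apply/eqP/rowP => j; rewrite mxE; apply/eqP/negbNE/negP/vj0.
have v1_gt0 : 0 < \sum_j `|v 0 j|.
  by rewrite (bigD1 j) //= ltr_pwDl ?normr_gt0 ?sumr_ge0.
rewrite -(ler_pM2r v1_gt0) mulr_sumr.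
apply: le_trans (ler_sum _ (fun j _ => hcol j)) _.
rewrite exchange_big /= mulr_sumr; apply: ler_sum => i _.
rewrite -mulr_sumr -rmorph_sum mulrC; apply: ler_wpM2r; first exact: normr_ge0.
exact: hrow.
Qed.

Lemma spectral_radius_lt1_of_exprmx N :
  \sum_i \sum_j (B ^+ N) i j < 1 -> spectral_radius B < 1.
Proof.
set c := \sum_i \sum_j _ => c1.
have hN l : eigenvalue (map_mx (fun x : R => x%:C%C) B) l -> Normc.normc l ^+ N <= c.
  move=> /(eigenvalue_exprn_le N); suff -> : `|l| = (Normc.normc l)%:C%C.
    by rewrite -rmorphXn lecR.
  by case: l.
have c0 : 0 <= c by apply: sumr_ge0 => i _; apply: sumr_ge0 => j _; exact: exprmx_ge0.
clearbody c; case: N hN => [|N] hN.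
  apply: le_lt_trans ltr01; apply: spectral_radius_le => // l /hN.
  by rewrite expr0 => /le_lt_trans/(_ c1); rewrite ltxx.
apply: (@le_lt_trans _ _ (c `^ N.+1%:R^-1)); last by rewrite powR_lt1 ?c0 ?invr_gt0.
apply: spectral_radius_le; first exact: powR_ge0.
by move=> l /hN; apply: ler_powR_invn; case: l => a b; exact: sqrtr_ge0.
Qed.

Lemma spectral_radius_lt1_of_psum_bounded :
  (forall i j, psum_bounded (fun k => (B ^+ k) i j)) -> spectral_radius B < 1.
Proof.
move=> hB; have hsum : psum_bounded (fun k => \sum_i \sum_j (B ^+ k) i j).
  by apply: psum_bounded_sum => i; apply: psum_bounded_sum => j; exact: hB.
have [N] := psum_bounded_exists_lt hsum ltr01; exact: spectral_radius_lt1_of_exprmx.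
Qed.

Lemma psum_bounded_exprmx {b : 'cV[R]_n} :
  (forall i, 0 <= b i ord0) ->
  (forall i, psum_bounded (fun k => (B ^+ k *m b) i ord0)) ->
  (forall j, exists m, 0 < (B ^+ m *m b) j ord0) ->
  forall i j, psum_bounded (fun k => (B ^+ k) i j).
Proof.
move=> b_ge0 hb hreach i j; have [m Bmb_gt0] := hreach j; have [K hK] := hb i.
have Bkb_ge0 := exprmx_mul_ge0 b_ge0.
exists (K / (B ^+ m *m b) j ord0) => t; rewrite ler_pdivlMr // mulr_suml.
apply: le_trans (hK (m + t)%N); rewrite big_split_ord /=.
apply: ler_wpDl; first by apply: sumr_ge0.
apply: ler_sum => k _; rewrite addnC exprD -mulmxA [leRHS]mxE.
by apply: (ler_sum_term j) => l; rewrite mulr_ge0 ?exprmx_ge0.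
Qed.

End NonnegativeMatrix.

Lemma closed_mass_exprmx (R : comNzRingType) (n : nat) (P : 'M[R]_n) (U : pred 'I_n) :
  (forall j k, U j -> ~~ U k -> P j k = 0) -> (forall j, U j -> \sum_k P j k = 1) ->
  forall t j, U j -> \sum_(k | U k) (P ^+ t) j k = 1.
Proof.
move=> closedU stochP; elim=> [|t IH] j Uj.
  rewrite expr0 (bigD1 j) //= mxE eqxx big1 ?addr0 // => k /andP[_ kj].
  by rewrite mxE eq_sym (negbTE kj).
rewrite exprS -mulmxE; under eq_bigr do rewrite mxE.
rewrite exchange_big /= -(stochP j Uj); apply: eq_bigr => l _; rewrite -mulr_sumr.
by have [Ul|nUl] := boolP (U l); [rewrite IH ?mulr1 | rewrite closedU ?mul0r].
Qed.

Lemma inS_lift (S : nat) (j : 'I_S) : inS j = lift (sink S) j.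
Proof. by apply: val_inj; exact: esym (lift_max j). Qed.

Lemma unlift_inS (S : nat) (j : 'I_S) : unlift (sink S) (inS j) = Some j.
Proof. by rewrite inS_lift liftK. Qed.

Section StationaryPolicy.
Context {R : realType} {S : nat} {A : finType}.
Context {p r : 'I_S.+1 -> A -> 'I_S.+1 -> R} {beta : R} {d : 'I_S -> A -> R}.
Hypotheses (hp : is_transition_kernel p) (hd : decision_rule d).

Local Notation B := (Bmat p r beta d).
Local Notation b := (bvec p r beta d).

Lemma Bmat_ge0 i j : 0 <= B i j.
Proof. by rewrite mxE; apply: sumr_ge0 => a _; rewrite !mulr_ge0 ?hp.1 ?hd.1 ?expR_ge0. Qed.

Lemma bvec_ge0 i : 0 <= b i ord0.
Proof. by rewrite mxE; apply: sumr_ge0 => a _; rewrite !mulr_ge0 ?hp.1 ?hd.1 ?expR_ge0. Qed.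

Lemma Bmat_gt0 j j' a : 0 < d j a -> 0 < p (inS j) a (inS j') -> 0 < B j j'.
Proof.
move=> da_gt0 pa_gt0; rewrite mxE; apply: lt_le_trans (ler_sum_term a _).
  by rewrite !mulr_gt0 ?expR_gt0.
by move=> a'; rewrite !mulr_ge0 ?hp.1 ?hd.1 ?expR_ge0.
Qed.

Lemma bvec_gt0 j a : 0 < d j a -> 0 < p (inS j) a (sink S) -> 0 < b j ord0.
Proof.
move=> da_gt0 pa_gt0; rewrite mxE; apply: lt_le_trans (ler_sum_term a _).
  by rewrite !mulr_gt0 ?expR_gt0.
by move=> a'; rewrite !mulr_ge0 ?hp.1 ?hd.1 ?expR_ge0.
Qed.

Lemma w_t_le (z : 'cV[R]_S) : (forall s, 0 <= z s ord0) ->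
  forall t i, w_t p r beta d z t i ord0 <= - \sum_(k < t) (B ^+ k *m b) i ord0.
Proof.
move=> z_ge0 t i; rewrite /w_t 2!mxE [X in _ + X]mxE summxE mxpowE.
under eq_bigr do rewrite mxpowE.
by rewrite -[leRHS]add0r lerD2r oppr_le0 exprmx_mul_ge0 //; exact: Bmat_ge0.
Qed.

Lemma psum_bounded_of_w_inf (z : 'cV[R]_S) (i : 'I_S) :
  (forall s, 0 <= z s ord0) -> w_inf p r beta d z i \is a fin_num ->
  psum_bounded (fun k => (B ^+ k *m b) i ord0).
Proof.
move=> z_ge0; apply: psum_bounded_of_limn_einf => [k|t]; last exact: w_t_le.
exact: (exprmx_mul_ge0 Bmat_ge0 bvec_ge0).
Qed.

Lemma transient_no_closed_set (htrans : transient p) (pi : 'I_S.+1 -> A) (U : pred 'I_S) :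
  (forall j, U j -> p (inS j) (pi (inS j)) (sink S) = 0) ->
  (forall j j', U j -> ~~ U j' -> p (inS j) (pi (inS j)) (inS j') = 0) ->
  forall j, ~~ U j.
Proof.
move=> no_exit closedU j0; apply/negP => Uj0.
pose V s := oapp U false (unlift (sink S) s).
have V_inS j : V (inS j) = U j by rewrite /V unlift_inS.
have sum_V (F : 'I_S.+1 -> R) : \sum_(s | V s) F s = \sum_(j | U j) F (inS j).
  rewrite big_mkcond big_ord_recr /= -/(sink S) {2}/V unlift_none addr0 [RHS]big_mkcond.
  by apply: eq_bigr => j _; rewrite -/(inS j) V_inS.
have mass t : \sum_(j | U j) state_prob p pi (inS j0) (inS j) t = 1.
  rewrite -sum_V; apply: closed_mass_exprmx; last by rewrite V_inS.
  - move=> s s'; case: (unliftP (sink S) s) => [j|] -> Vs; last by rewrite /V unlift_none in Vs.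
    rewrite -inS_lift V_inS in Vs; rewrite mxE.
    case: (unliftP (sink S) s') => [j'|] ->; last by rewrite -inS_lift no_exit.
    by rewrite -!inS_lift V_inS; exact: closedU.
  - by move=> s _; under eq_bigr do rewrite mxE; exact: hp.2.
have visits_bounded : psum_bounded (fun t => \sum_(j | U j) state_prob p pi (inS j0) (inS j) t).
  exact: (psum_bounded_sum U (u := fun j => state_prob p pi (inS j0) (inS j)) (htrans pi j0)).
have [N] := psum_bounded_exists_lt visits_bounded ltr01.
by rewrite mass ltxx.
Qed.

Lemma decision_rule_support j : exists a, 0 < d j a.
Proof.
have [|a /andP[_ da_gt0]] := psumr_neq0P (P := xpredT) (fun a _ => hd.1 j a).
  by rewrite hd.2; apply/eqP; exact: oner_neq0.
by exists a.
Qed.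

Lemma bvec_reachable (htrans : transient p) j : exists m, 0 < (B ^+ m *m b) j ord0.
Proof.
have [act act_gt0] := choice decision_rule_support.
pose U k := `[< ~ exists m, 0 < (B ^+ m *m b) k ord0 >].
pose pi s := oapp act (act j) (unlift (sink S) s).
have pi_inS k : pi (inS k) = act k by rewrite /pi unlift_inS.
have p_eq0 s a s' : ~ 0 < p s a s' -> p s a s' = 0.
  by move=> p_ngt0; apply/eqP; rewrite eq_le hp.1 andbT leNgt; apply/negP.
apply: contrapT => nreach_j.
suff : ~~ U j by move/asboolPn; apply.
apply: (transient_no_closed_set htrans pi).
- move=> k /asboolP nreach_k; rewrite pi_inS; apply: p_eq0 => p_gt0; apply: nreach_k.
  by exists 0%N; rewrite expr0 mul1mx; exact: bvec_gt0 _ _ (act_gt0 k) p_gt0.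
- move=> k k' /asboolP nreach_k /asboolPn/contrapT [m reach_k'].
  rewrite pi_inS; apply: p_eq0 => p_gt0; apply: nreach_k; exists m.+1.
  rewrite exprS -mulmxE -mulmxA mxE; apply: lt_le_trans (ler_sum_term k' _).
    exact: mulr_gt0 (Bmat_gt0 _ _ _ (act_gt0 k) p_gt0) reach_k'.
  by move=> l; rewrite mulr_ge0 ?Bmat_ge0 //; exact: (exprmx_mul_ge0 Bmat_ge0 bvec_ge0).
Qed.

End StationaryPolicy.

Theorem lemma2 (R : realType) (S : nat) (A : finType)
  (p r : 'I_S.+1 -> A -> 'I_S.+1 -> R) (beta : R)
  (hbeta : 0 < beta)
  (hp : is_transition_kernel p)
  (hsink : sink_absorbing p r)
  (htrans : transient p)
  (d : 'I_S -> A -> R) (hd : decision_rule d)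
  (z : 'cV[R]_S) (hz : forall s, 0 <= z s ord0) :
  (forall s : 'I_S, w_inf p r beta d z s \is a fin_num) ->
  spectral_radius (Bmat p r beta d) < 1.
Proof.
move=> w_fin; apply: spectral_radius_lt1_of_psum_bounded; first exact: Bmat_ge0.
apply: (psum_bounded_exprmx (Bmat_ge0 hp hd) (bvec_ge0 hp hd)).
- by move=> i; exact: psum_bounded_of_w_inf.
- exact: bvec_reachable.
Qed.
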